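(* Let $\Gamma\subset\mathrm{SL}_2(\mathbb{C})$ be finite, $\Gamma'\subset\Gamma$ a normal subgroup, and $c\in(\mathbb{C}\Gamma)^\Gamma_1\cap\mathbb{C}\Gamma'$ (so $c$ is also a central element of $\mathbb{C}\Gamma'$ of the form $1+\sum_{\gamma\ne1}c_\gamma\gamma$). Let $\mathcal{A}'_c=e'H'_ce'$ be the corresponding quantization of $\mathbb{C}^2/\Gamma'$ and $\mathcal{A}_c=eH_ce$ that of $\mathbb{C}^2/\Gamma$. Then $\Gamma/\Gamma'$ acts on $\mathcal{A}'_c$ by algebra automorphisms, and the quantizations $(\mathcal{A}'_c)^{\Gamma/\Gamma'}$ and $\mathcal{A}_c$ of $\mathbb{C}^2/\Gamma$ are isomorphic.
   Context: $(\mathbb{C}\Gamma)^\Gamma_1$ denotes central elements of $\mathbb{C}\Gamma$ of the form $c=1+\sum_{\gamma\ne1}c_\gamma\gamma$. $H_c=\mathbb{C}\langle x,y\rangle\#\Gamma/(xy-yx-c)$ is the Crawley-Boevey–Holland algebra, $e\in\mathbb{C}\Gamma$ the averaging idempotent, and $eH_ce$ (with unit $e$) is a filtered quantization of $\mathbb{C}[\mathbb{C}^2/\Gamma]$; similarly $H'_c$, $e'$ for $\Gamma'$. *)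

From mathcomp Require Import all_boot all_algebra.
From mathcomp Require Import reals complex.
Set Implicit Arguments. Unset Strict Implicit. Unset Printing Implicit Defensive.
Import GRing.Theory.
Local Open Scope ring_scope.

Section CBH.
Variable F : fieldType.

Definition finite_subgroup_SL2 (G : seq 'M[F]_2) : Prop :=
  [/\ uniq G, 1 \in G,
      {in G &, forall g h, g * h \in G},
      {in G, forall g, g \in unitmx /\ invmx g \in G} &
      {in G, forall g, \det g = 1}].

Definition normal_subgroup (K G : seq 'M[F]_2) : Prop :=
  [/\ uniq K, 1 \in K,
      {in K &, forall g h, g * h \in K},
      {in K, forall g, invmx g \in K} &
      {subset K <= G}] /\
  {in G & K, forall g h, g * h * invmx g \in K}.

(* An element c = sum_g c g . g of the group algebra F[G], given by its
   coefficient function (supported on G). *)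
Definition in_group_algebra (G : seq 'M[F]_2) (c : 'M[F]_2 -> F) : Prop :=
  forall g, g \notin G -> c g = 0.

(* c is central in F[G]: g * c = c * g for every g in G, compared
   coefficientwise (coefficient of k on both sides). *)
Definition central_in_group_algebra (G : seq 'M[F]_2) (c : 'M[F]_2 -> F) :=
  in_group_algebra G c /\
  {in G, forall g, forall k, c (invmx g * k) = c (k * invmx g)}.

Definition central_one (G : seq 'M[F]_2) (c : 'M[F]_2 -> F) :=
  central_in_group_algebra G c /\ c 1 = 1.

Definition alg_hom (A B : algType F) (f : A -> B) : Prop :=
  [/\ f 1 = 1, forall a b, f (a * b) = f a * f b &
      forall (k : F) a b, f (k *: a + b) = k *: f a + f b].

(* The defining relations of H_c = F<x,y> # G / (xy - yx - c), where G acts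
   on F^2 = F x + F y (column vectors) and g v g^-1 = g(v). *)
Definition CBH_rel (B : algType F) (G : seq 'M[F]_2) (c : 'M[F]_2 -> F)
    (X Y : B) (iota : 'M[F]_2 -> B) : Prop :=
  [/\ iota 1 = 1,
      {in G &, forall g h, iota (g * h) = iota g * iota h},
      {in G, forall g, iota g * X = (g 0 0 *: X + g 1 0 *: Y) * iota g},
      {in G, forall g, iota g * Y = (g 0 1 *: X + g 1 1 *: Y) * iota g} &
      X * Y - Y * X = \sum_(g <- G) c g *: iota g].

Definition on_gens (A B : algType F) (G : seq 'M[F]_2) (f : A -> B)
    (X Y : A) (iota : 'M[F]_2 -> A) (X' Y' : B) (iota' : 'M[F]_2 -> B) :=
  [/\ f X = X', f Y = Y' & {in G, forall g, f (iota g) = iota' g}].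

(* (H, X, Y, iota) is the Crawley-Boevey--Holland algebra H_c: the algebra
   presented by generators x, y, G and the relations above, i.e. it
   satisfies the relations and is initial among algebras satisfying them. *)
Definition is_CBH (H : algType F) (G : seq 'M[F]_2) (c : 'M[F]_2 -> F)
    (X Y : H) (iota : 'M[F]_2 -> H) : Prop :=
  CBH_rel G c X Y iota /\
  forall (B : algType F) (X' Y' : B) (iota' : 'M[F]_2 -> B),
    CBH_rel G c X' Y' iota' ->
    (exists f : H -> B, alg_hom f /\ on_gens G f X Y iota X' Y' iota') /\
    (forall f1 f2 : H -> B, alg_hom f1 -> alg_hom f2 ->
       on_gens G f1 X Y iota X' Y' iota' -> on_gens G f2 X Y iota X' Y' iota' ->
       f1 =1 f2).

Definition avg_idem (H : algType F) (G : seq 'M[F]_2) (iota : 'M[F]_2 -> H) : H :=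
  (size G)%:R^-1 *: \sum_(g <- G) iota g.

Definition spherical (H : algType F) (e : H) (a : H) : Prop := e * a * e = a.

Definition word (H : algType F) (X Y : H) (w : seq bool) : H :=
  \prod_(b <- w) (if b then X else Y).

(* Standard filtration of H_c: deg x = deg y = 1, deg g = 0.
   filt k a  <->  a lies in the span of the w * g, |w| <= k, g in G. *)
Definition filt (H : algType F) (G : seq 'M[F]_2) (X Y : H)
    (iota : 'M[F]_2 -> H) (k : nat) (a : H) : Prop :=
  exists s : seq (F * (seq bool * 'M[F]_2)),
    all (fun t => (size t.2.1 <= k)%N && (t.2.2 \in G)) s /\
    a = \sum_(t <- s) t.1 *: (word X Y t.2.1 * iota t.2.2).

(* F_{k-1}, with F_{-1} = 0. *)
Definition filt_pred (H : algType F) (G : seq 'M[F]_2) (X Y : H)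
    (iota : 'M[F]_2 -> H) (k : nat) (a : H) : Prop :=
  if k is k'.+1 then filt G X Y iota k' a else a = 0.

End CBH.

(* The automorphisms alpha_g (g in G) of H'_c come from the universal property:
   g acts linearly on span(x, y) and by conjugation on K, and the commutation
   relation survives because det g = 1 and c is invariant under conjugation.
   An element h of K acts as conjugation by h, which e' absorbs, so G/K acts on
   e'H'_ce'. As c is supported on K, H_c satisfies the relations of H'_c, which
   gives j : H'_c -> H_c, and the isomorphism is phi(a) = e j(a) e.  On
   invariants j(a) commutes with G, hence phi(a) = j(a) e is multiplicative.
   Since H_c = j(H'_c) G, every e b e is some e j(A) e, and A may be replaced by
   e' (G-average of A) e'.  Injectivity, and strictness for the filtrations,
   come from the induced representation psi : H_c -> M_[G:K](H'_c): psi(j a) is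
   diagonal with entries alpha_{r^-1}(a) over coset representatives r, and the
   corner entry of psi(e) is [G:K]^-1 e', so that of psi(phi a) is [G:K]^-1 a. *)

From HB Require Import structures.
From mathcomp Require Import all_boot all_algebra.
From mathcomp Require Import reals complex.
From mathcomp Require boolp.
Set Implicit Arguments. Unset Strict Implicit. Unset Printing Implicit Defensive.
Import GRing.Theory.
Local Open Scope ring_scope.

Lemma sum_reindex_uniq (T : eqType) (V : nmodType) (s : seq T) (f : T -> T)
    (u : T -> V) :
  uniq s -> {in s, forall x, f x \in s} -> {in s &, injective f} ->
  \sum_(x <- s) u (f x) = \sum_(x <- s) u x.
Proof.
move=> us fs finj; rewrite -(big_map f xpredT u); apply: perm_big.
have fs_uniq : uniq (map f s) by rewrite map_inj_in_uniq.
have fs_sub : {subset map f s <= s} by move=> y /mapP [x xs ->]; apply: fs.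
have [_ fs_eq] := uniq_min_size fs_uniq fs_sub (eq_leq (esym (size_map f s))).
exact: uniq_perm.
Qed.

Lemma sum_restrict_support (T : eqType) (V : nmodType) (s t : seq T)
    (u : T -> V) :
  uniq s -> uniq t -> {subset t <= s} -> (forall x, x \notin t -> u x = 0) ->
  \sum_(x <- s) u x = \sum_(x <- t) u x.
Proof.
move=> us ut ts u0; rewrite (bigID (mem t)) /= [X in _ + X]big1 ?addr0; last first.
  by move=> x /u0.
rewrite -big_filter; apply/perm_big/uniq_perm; rewrite ?filter_uniq // => x.
by rewrite mem_filter; case xt: (x \in t); rewrite //= ts.
Qed.

Lemma avg_const (F : fieldType) (V : lmodType F) (T : Type) (s : seq T) (x : V) :
  (size s)%:R != 0 :> F -> (size s)%:R^-1 *: \sum_(i <- s) x = x.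
Proof.
move=> s_neq0; have -> : \sum_(i <- s) x = x *+ size s.
  by elim: {s_neq0}s => [|? s IHs]; rewrite ?big_nil ?big_cons ?IHs ?mulrS.
by rewrite -scaler_nat scalerA mulVf // scale1r.
Qed.

Lemma sandwich_scale_sum (F : fieldType) (A : algType F) (p q : A) (k : F)
    (I : Type) (r : seq I) (u : I -> A) :
  p * (k *: \sum_(i <- r) u i) * q = k *: \sum_(i <- r) p * u i * q.
Proof. by rewrite -scalerAr -scalerAl mulr_sumr mulr_suml. Qed.

Lemma natr_size_neq0 (R : idomainType) (T : eqType) (s : seq T) x :
  has_pchar0 R -> x \in s -> (size s)%:R != 0 :> R.
Proof. by move/pcharf0P=> ->; case: s. Qed.

Section MatrixGroup.
Variable F : fieldType.
Implicit Types (S G K rs : seq 'M[F]_2) (g h : 'M[F]_2).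

Definition is_mxgroup S :=
  [/\ uniq S, 1 \in S, {in S &, forall g h, g * h \in S},
      {in S, forall g, g^-1 \in S} & {in S, forall g, g \is a GRing.unit}].

Lemma SL2_mxgroup G : finite_subgroup_SL2 G -> is_mxgroup G.
Proof. by case=> uG G1 GM GV _; split=> // g /GV []. Qed.

Lemma normal_mxgroup K G :
  finite_subgroup_SL2 G -> normal_subgroup K G -> is_mxgroup K.
Proof. by case=> _ _ _ GV _ [[uK K1 KM KV /(_ _ _)/GV KG] _]; split=> // g /KG []. Qed.

Lemma normal_subgroup_subset K G : normal_subgroup K G -> {subset K <= G}.
Proof. by case=> [[]]. Qed.

Lemma sum_mxgroup_mull S (V : nmodType) (u : 'M[F]_2 -> V) g :
  is_mxgroup S -> g \in S -> \sum_(x <- S) u (g * x) = \sum_(x <- S) u x.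
Proof.
case=> uS _ SM _ SU gS; apply: sum_reindex_uniq => // [x xS|x y _ _]; first exact: SM.
exact/mulrI/SU.
Qed.

Lemma sum_mxgroup_mulr S (V : nmodType) (u : 'M[F]_2 -> V) g :
  is_mxgroup S -> g \in S -> \sum_(x <- S) u (x * g) = \sum_(x <- S) u x.
Proof.
case=> uS _ SM _ SU gS; apply: sum_reindex_uniq => // [x xS|x y _ _]; first exact: SM.
exact/mulIr/SU.
Qed.

Lemma sum_conj_normal S (V : nmodType) (u : 'M[F]_2 -> V) g :
  uniq S -> g \is a GRing.unit -> {in S, forall x, g * x * g^-1 \in S} ->
  \sum_(x <- S) u (g * x * g^-1) = \sum_(x <- S) u x.
Proof.
move=> uS gU Sg; apply: sum_reindex_uniq => // x y _ _ /(divIr gU).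
exact: mulrI.
Qed.

Definition left_transversal K G rs :=
  [/\ uniq rs, {subset rs <= G}, 1 \in rs,
      {in rs &, forall r1 r2, r1^-1 * r2 \in K -> r1 = r2} &
      {in G, forall g, exists2 r, r \in rs & r^-1 * g \in K}].

Lemma transversal_exists K G :
  is_mxgroup G -> is_mxgroup K -> {subset K <= G} -> exists rs, left_transversal K G rs.
Proof.
case=> _ G1 GM GV GU [_ K1 KM KV KU] KG.
pose rep g := nth 1 (1 :: G) (find (fun r => r^-1 * g \in K) (1 :: G)).
have rep_spec g : g \in G -> rep g \in G /\ (rep g)^-1 * g \in K.
  move=> gG; have has_g : has (fun r => r^-1 * g \in K) (1 :: G).
    by apply/hasP; exists g; rewrite ?inE ?gG ?orbT // mulVr ?GU.
  split; last exact: (nth_find 1 has_g).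
  have : rep g \in 1 :: G by rewrite mem_nth // -has_find.
  by rewrite inE => /predU1P [->|].
have rep_mulK g k : k \in K -> rep (g * k) = rep g.
  move=> kK; rewrite /rep; congr nth; apply: eq_find => r /=.
  rewrite mulrA; apply/idP/idP => [rgkK|/KM-> //].
  by rewrite -(mulrK (KU _ kK) (r^-1 * g)) KM ?KV.
have rep_rep g : g \in G -> rep (rep g) = rep g.
  move=> gG; have [rG /(rep_mulK (rep g))] := rep_spec g gG.
  by rewrite mulVKr ?GU // => /esym.
exists (undup (map rep G)); split=> [||||g gG].
- exact: undup_uniq.
- by move=> r; rewrite mem_undup => /mapP [g gG ->]; case: (rep_spec g gG).
- by rewrite mem_undup; apply/mapP; exists 1; rewrite // /rep /= invr1 mulr1 K1.
- move=> r1 r2; rewrite !mem_undup => /mapP [g1 g1G ->] /mapP [g2 g2G ->].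
  have [[r1G _] [r2G _]] := (rep_spec g1 g1G, rep_spec g2 g2G).
  by move/(rep_mulK (rep g1)); rewrite mulVKr ?GU // !rep_rep // => /esym.
- exists (rep g); last by case: (rep_spec g gG).
  by rewrite mem_undup; apply/mapP; exists g.
Qed.

End MatrixGroup.

Section AlgHom.
Variables (F : fieldType) (A B C : algType F) (f : A -> B).
Hypothesis hf : alg_hom f.

Lemma alg_hom1 : f 1 = 1. Proof. by case: hf. Qed.

Lemma alg_homM a b : f (a * b) = f a * f b. Proof. by case: hf. Qed.

Lemma alg_homD a b : f (a + b) = f a + f b.
Proof. by case: hf => _ _ /(_ 1 a b); rewrite !scale1r. Qed.

Lemma alg_hom0 : f 0 = 0.
Proof. by apply: (addrI (f 0)); rewrite -alg_homD !addr0. Qed.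

Lemma alg_homZ k a : f (k *: a) = k *: f a.
Proof. by case: hf => _ _ /(_ k a 0); rewrite !addr0 alg_hom0 addr0. Qed.

Lemma alg_homB a b : f (a - b) = f a - f b.
Proof. by rewrite alg_homD -scaleN1r alg_homZ scaleN1r. Qed.

Lemma alg_hom_sum I (r : seq I) (P : pred I) (u : I -> A) :
  f (\sum_(i <- r | P i) u i) = \sum_(i <- r | P i) f (u i).
Proof. exact: (big_morph f alg_homD alg_hom0). Qed.

Lemma alg_hom_comp (g : B -> C) : alg_hom g -> alg_hom (g \o f).
Proof.
move=> hg; split=> [|a b|k a b] /=.
- by rewrite alg_hom1; case: hg => ->.
- by rewrite alg_homM; case: hg => _ ->.
- by case: hf => _ _ ->; case: hg => _ _ ->.
Qed.

End AlgHom.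

Lemma alg_hom_id (F : fieldType) (A : algType F) : alg_hom (@id A).
Proof. by []. Qed.

Lemma alg_hom_conj (F : fieldType) (A : algType F) (u v : A) :
  u * v = 1 -> v * u = 1 -> alg_hom (fun x => u * x * v).
Proof.
move=> uv vu; split=> [|x y|k x y]; first by rewrite mulr1.
  by rewrite !mulrA -[u * x * v * u]mulrA vu mulr1.
by rewrite mulrDr mulrDl -scalerAr -scalerAl.
Qed.

Lemma det_mx2 (F : fieldType) (g : 'M[F]_2) :
  \det g = g 0 0 * g 1 1 - g 1 0 * g 0 1.
Proof.
rewrite (expand_det_row g 0) !big_ord_recl big_ord0 addr0 /cofactor !det_mx11 !mxE /=.
have lift01 : lift 0 (0 : 'I_1) = 1 :> 'I_2 by apply: val_inj.
have lift10 : lift 1 (0 : 'I_1) = 0 :> 'I_2 by apply: val_inj.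
have ord0E : ord0 = 0 :> 'I_2 by apply: val_inj.
have liftE : lift ord0 (ord0 : 'I_1) = 1 :> 'I_2 by apply: val_inj.
rewrite ?(lift01, lift10, ord0E, liftE) expr0 expr1 mul1r mulN1r mulrN.
by rewrite [g 0 1 * _]mulrC.
Qed.

Section PlaneEmbedding.
Variables (F : fieldType) (A : algType F) (X Y : A).

Definition ex : 'cV[F]_2 := delta_mx 0 0.
Definition ey : 'cV[F]_2 := delta_mx 1 0.

Definition vecXY (u : 'cV[F]_2) : A := u 0 0 *: X + u 1 0 *: Y.

Lemma mulmx_col2E (g : 'M[F]_2) (u : 'cV[F]_2) i :
  (g *m u) i 0 = g i 0 * u 0 0 + g i 1 * u 1 0.
Proof.
have ord0E : ord0 = 0 :> 'I_2 by apply: val_inj.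
have liftE : lift ord0 (ord0 : 'I_1) = 1 :> 'I_2 by apply: val_inj.
by rewrite mxE !big_ord_recl big_ord0 addr0 ord0E liftE.
Qed.

Lemma mulmx_exE (g : 'M[F]_2) i : (g *m ex) i 0 = g i 0.
Proof. by rewrite mulmx_col2E !mxE /= mulr1 mulr0 addr0. Qed.

Lemma mulmx_eyE (g : 'M[F]_2) i : (g *m ey) i 0 = g i 1.
Proof. by rewrite mulmx_col2E !mxE /= mulr1 mulr0 add0r. Qed.

Lemma vecXY_ex : vecXY ex = X.
Proof. by rewrite /vecXY !mxE /= scale1r scale0r addr0. Qed.

Lemma vecXY_ey : vecXY ey = Y.
Proof. by rewrite /vecXY !mxE /= scale1r scale0r add0r. Qed.

Lemma vecXY_mul_ex (g : 'M[F]_2) : vecXY (g *m ex) = g 0 0 *: X + g 1 0 *: Y.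
Proof. by rewrite /vecXY !mulmx_exE. Qed.

Lemma vecXY_mul_ey (g : 'M[F]_2) : vecXY (g *m ey) = g 0 1 *: X + g 1 1 *: Y.
Proof. by rewrite /vecXY !mulmx_eyE. Qed.

Lemma vecXY_mulmx (g : 'M[F]_2) u :
  vecXY (g *m u) = u 0 0 *: vecXY (g *m ex) + u 1 0 *: vecXY (g *m ey).
Proof.
rewrite vecXY_mul_ex vecXY_mul_ey /vecXY !mulmx_col2E !scalerDr !scalerDl !scalerA.
rewrite [u 0 0 * _]mulrC [u 1 0 * _]mulrC [u 0 0 * g 1 0]mulrC [u 1 0 * g 1 1]mulrC.
by rewrite !addrA; congr (_ + _); rewrite addrAC.
Qed.

Lemma commr_vecXY (g : 'M[F]_2) :
  vecXY (g *m ex) * vecXY (g *m ey) - vecXY (g *m ey) * vecXY (g *m ex) =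
  \det g *: (X * Y - Y * X).
Proof.
pose br (a b : A) := a * b - b * a.
have brDl a b z : br (a + b) z = br a z + br b z.
  by rewrite /br mulrDl mulrDr opprD addrACA.
have brDr a b z : br z (a + b) = br z a + br z b.
  by rewrite /br mulrDl mulrDr opprD addrACA.
have brZl k a z : br (k *: a) z = k *: br a z.
  by rewrite /br -scalerAl -scalerAr scalerBr.
have brZr k a z : br z (k *: a) = k *: br z a.
  by rewrite /br -scalerAl -scalerAr scalerBr.
have brxx a : br a a = 0 by rewrite /br subrr.
have brC a b : br b a = - br a b by rewrite /br opprB.
rewrite -/(br _ _) -/(br X Y) vecXY_mul_ex vecXY_mul_ey det_mx2.
rewrite !(brDl, brDr, brZl, brZr) !brxx (brC X Y) !scaler0 add0r addr0.
by rewrite !scalerN !scalerA scalerBl.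
Qed.

End PlaneEmbedding.

Arguments ex {F}.
Arguments ey {F}.

Section MatrixAlgebra.
Variables (F : fieldType) (A : algType F) (n : nat).

(* 'M[A]_n.+1 is only an A-module; here F acts entrywise. *)
Definition mxalg := 'M[A]_n.+1.
HB.instance Definition _ := GRing.NzRing.on mxalg.

Definition mxalg_scale (k : F) (M : mxalg) : mxalg := map_mx (fun x => k *: x) M.

Fact mxalg_scaleA a b M : mxalg_scale a (mxalg_scale b M) = mxalg_scale (a * b) M.
Proof. by apply/matrixP=> i j; rewrite !mxE scalerA. Qed.
Fact mxalg_scale1 : left_id 1 mxalg_scale.
Proof. by move=> M; apply/matrixP=> i j; rewrite !mxE scale1r. Qed.
Fact mxalg_scaleDr : right_distributive mxalg_scale +%R.
Proof. by move=> a M N; apply/matrixP=> i j; rewrite !mxE scalerDr. Qed.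
Fact mxalg_scaleDl M : {morph mxalg_scale^~ M : a b / a + b}.
Proof. by move=> a b; apply/matrixP=> i j; rewrite !mxE scalerDl. Qed.
HB.instance Definition _ := GRing.Zmodule_isLmodule.Build F mxalg
  mxalg_scaleA mxalg_scale1 mxalg_scaleDr mxalg_scaleDl.

Lemma mxalg_mulE (M N : mxalg) i j : (M * N) i j = \sum_l M i l * N l j.
Proof. by rewrite -mulmxE !mxE. Qed.

Lemma mxalg_scaleE k (M : mxalg) i j : (k *: M) i j = k *: M i j.
Proof. by rewrite !mxE. Qed.

Fact mxalg_scaleAl (a : F) (M N : mxalg) : a *: (M * N) = (a *: M) * N.
Proof.
apply/matrixP=> i j; rewrite mxalg_scaleE !mxalg_mulE scaler_sumr.
by apply: eq_bigr => l _; rewrite mxalg_scaleE scalerAl.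
Qed.
HB.instance Definition _ := GRing.Lmodule_isLalgebra.Build F mxalg mxalg_scaleAl.

Fact mxalg_scaleAr (a : F) (M N : mxalg) : a *: (M * N) = M * (a *: N).
Proof.
apply/matrixP=> i j; rewrite mxalg_scaleE !mxalg_mulE scaler_sumr.
by apply: eq_bigr => l _; rewrite mxalg_scaleE scalerAr.
Qed.
HB.instance Definition _ := GRing.Lalgebra_isAlgebra.Build F mxalg mxalg_scaleAr.

Lemma mxalg_subE (M N : mxalg) i j : (M - N) i j = M i j - N i j.
Proof. by rewrite !mxE. Qed.

Lemma mxalg_oneE i j : (1 : mxalg) i j = (i == j)%:R.
Proof. by rewrite !mxE. Qed.

Definition diag_of (d : 'I_n.+1 -> A) : mxalg :=
  \matrix_(i, j) if i == j then d i else 0.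

Lemma diag_ofE d i j : diag_of d i j = if i == j then d i else 0.
Proof. by rewrite mxE. Qed.

Lemma eq_diag_of d1 d2 : d1 =1 d2 -> diag_of d1 = diag_of d2.
Proof. by move=> e12; apply/matrixP=> i j; rewrite !diag_ofE e12. Qed.

Lemma mul_mx_diag_of (M : mxalg) d i j : (M * diag_of d) i j = M i j * d j.
Proof.
rewrite mxalg_mulE (bigD1 j) //= big1 ?addr0 => [|l /negbTE lj].
  by rewrite diag_ofE eqxx.
by rewrite diag_ofE lj mulr0.
Qed.

Lemma mul_diag_of_mx (M : mxalg) d i j : (diag_of d * M) i j = d i * M i j.
Proof.
rewrite mxalg_mulE (bigD1 i) //= big1 ?addr0 => [|l li].
  by rewrite diag_ofE eqxx.
by rewrite diag_ofE eq_sym (negbTE li) mul0r.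
Qed.

Lemma diag_ofM d1 d2 : diag_of d1 * diag_of d2 = diag_of (fun i => d1 i * d2 i).
Proof.
apply/matrixP=> i j; rewrite mul_mx_diag_of !diag_ofE.
by case: eqP => [->|]; rewrite ?mul0r.
Qed.

Lemma diag_of1 : diag_of (fun _ => 1) = 1.
Proof. by apply/matrixP=> i j; rewrite diag_ofE mxalg_oneE; case: eqP. Qed.

Lemma diag_ofZ k d : k *: diag_of d = diag_of (fun i => k *: d i).
Proof.
by apply/matrixP=> i j; rewrite mxalg_scaleE !diag_ofE; case: eqP; rewrite ?scaler0.
Qed.

Lemma diag_ofD d1 d2 : diag_of d1 + diag_of d2 = diag_of (fun i => d1 i + d2 i).
Proof. by apply/matrixP=> i j; rewrite mxE !diag_ofE; case: eqP; rewrite ?addr0. Qed.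

End MatrixAlgebra.

Section Averaging.
Variables (F : fieldType) (A : algType F) (S : seq 'M[F]_2) (iota : 'M[F]_2 -> A).
Hypothesis grpS : is_mxgroup S.
Hypothesis iotaM : {in S &, forall g h, iota (g * h) = iota g * iota h}.

Lemma avg_idem_mull g : g \in S -> iota g * avg_idem S iota = avg_idem S iota.
Proof.
move=> gS; rewrite /avg_idem -scalerAr mulr_sumr -[in RHS](sum_mxgroup_mull _ grpS gS).
by rewrite big_seq [in RHS]big_seq; congr (_ *: _); apply: eq_bigr => h hS; rewrite iotaM.
Qed.

Lemma avg_idem_mulr g : g \in S -> avg_idem S iota * iota g = avg_idem S iota.
Proof.
move=> gS; rewrite /avg_idem -scalerAl mulr_suml -[in RHS](sum_mxgroup_mulr _ grpS gS).
by rewrite big_seq [in RHS]big_seq; congr (_ *: _); apply: eq_bigr => h hS; rewrite iotaM.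
Qed.

Lemma avg_idem_absorbl (a : A) :
  (size S)%:R != 0 :> F -> {in S, forall g, iota g * a = a} -> avg_idem S iota * a = a.
Proof.
move=> S_neq0 Sa; rewrite /avg_idem -scalerAl mulr_suml big_seq (eq_bigr (fun=> a)) //.
by rewrite -big_seq avg_const.
Qed.

Lemma avg_idem_absorbr (a : A) :
  (size S)%:R != 0 :> F -> {in S, forall g, a * iota g = a} -> a * avg_idem S iota = a.
Proof.
move=> S_neq0 Sa; rewrite /avg_idem -scalerAr mulr_sumr big_seq (eq_bigr (fun=> a)) //.
by rewrite -big_seq avg_const.
Qed.

Lemma avg_idem_idem : (size S)%:R != 0 :> F ->
  avg_idem S iota * avg_idem S iota = avg_idem S iota.
Proof. by move/avg_idem_absorbr; apply=> g /avg_idem_mulr. Qed.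

End Averaging.

Lemma spherical_mull (F : fieldType) (A : algType F) (p a : A) :
  p * p = p -> spherical p a -> p * a = a.
Proof. by move=> pp <-; rewrite !mulrA pp. Qed.

Lemma spherical_mulr (F : fieldType) (A : algType F) (p a : A) :
  p * p = p -> spherical p a -> a * p = a.
Proof. by move=> pp <-; rewrite -!mulrA pp. Qed.

Lemma spherical_sandwich (F : fieldType) (A : algType F) (p a : A) :
  p * p = p -> spherical p (p * a * p).
Proof. by move=> pp; rewrite /spherical !mulrA pp -mulrA pp. Qed.

Section Relations.
Variables (F : fieldType) (A : algType F) (S : seq 'M[F]_2) (c : 'M[F]_2 -> F).
Variables (X Y : A) (iota : 'M[F]_2 -> A).
Hypothesis hR : CBH_rel S c X Y iota.

Lemma CBH_rel1 : iota 1 = 1. Proof. by case: hR. Qed.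

Lemma CBH_relM : {in S &, forall g h, iota (g * h) = iota g * iota h}.
Proof. by case: hR. Qed.

Lemma CBH_rel_comm : X * Y - Y * X = \sum_(g <- S) c g *: iota g.
Proof. by case: hR. Qed.

Lemma CBH_rel_vec g u : g \in S ->
  iota g * vecXY X Y u = vecXY X Y (g *m u) * iota g.
Proof.
move=> gS; case: hR => _ _ iotaX iotaY _.
rewrite {1}/vecXY mulrDr -!scalerAr iotaX // iotaY // vecXY_mulmx.
by rewrite vecXY_mul_ex vecXY_mul_ey [RHS]mulrDl -!scalerAl.
Qed.

Lemma CBH_rel_twist k p q h u : k \in S -> k * q = p * h ->
  iota k * vecXY X Y (q *m u) = vecXY X Y (p *m (h *m u)) * iota k.
Proof. by move=> kS kqph; rewrite CBH_rel_vec // !mulmxA !mulmxE kqph. Qed.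

Lemma CBH_rel_inv g : g \in S -> g \is a GRing.unit -> g^-1 \in S ->
  iota g * iota g^-1 = 1 /\ iota g^-1 * iota g = 1.
Proof. by move=> gS gU gVS; rewrite -!CBH_relM // mulrV ?mulVr // CBH_rel1. Qed.

Lemma CBH_rel_conj g u : g \in S -> g \is a GRing.unit -> g^-1 \in S ->
  iota g * vecXY X Y u * iota g^-1 = vecXY X Y (g *m u).
Proof.
by move=> gS gU gVS; rewrite CBH_rel_vec // -mulrA (CBH_rel_inv gS gU gVS).1 mulr1.
Qed.

Lemma CBH_rel_conjX g : g \in S -> g \is a GRing.unit -> g^-1 \in S ->
  iota g * X * iota g^-1 = vecXY X Y (g *m ex).
Proof. by move=> gS gU gVS; rewrite -CBH_rel_conj // vecXY_ex. Qed.

Lemma CBH_rel_conjY g : g \in S -> g \is a GRing.unit -> g^-1 \in S ->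
  iota g * Y * iota g^-1 = vecXY X Y (g *m ey).
Proof. by move=> gS gU gVS; rewrite -CBH_rel_conj // vecXY_ey. Qed.

Lemma CBH_rel_hom (B : algType F) (f : A -> B) : alg_hom f ->
  CBH_rel S c (f X) (f Y) (f \o iota).
Proof.
move=> hf; case: hR => iota1 iotaM iotaX iotaY comm; split=> /=.
- by rewrite iota1 (alg_hom1 hf).
- by move=> g h gS hS; rewrite iotaM // (alg_homM hf).
- by move=> g gS; rewrite -(alg_homM hf) iotaX // !(alg_homM hf, alg_homD hf, alg_homZ hf).
- by move=> g gS; rewrite -(alg_homM hf) iotaY // !(alg_homM hf, alg_homD hf, alg_homZ hf).
- rewrite -!(alg_homM hf) -(alg_homB hf) comm (alg_hom_sum hf).
  by apply: eq_bigr => g _; rewrite (alg_homZ hf).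
Qed.

End Relations.

Section UniversalProperty.
Variables (F : fieldType) (H : algType F) (S : seq 'M[F]_2) (c : 'M[F]_2 -> F).
Variables (X Y : H) (iota : 'M[F]_2 -> H).
Hypothesis hH : is_CBH S c X Y iota.

Lemma CBH_hom_exists (B : algType F) (X' Y' : B) (iota' : 'M[F]_2 -> B) :
  CBH_rel S c X' Y' iota' ->
  exists f : H -> B, alg_hom f /\ on_gens S f X Y iota X' Y' iota'.
Proof. by move=> hR; case: (hH.2 B X' Y' iota' hR). Qed.

Lemma CBH_hom_unique (B : algType F) (f1 f2 : H -> B) :
  alg_hom f1 -> alg_hom f2 -> f1 X = f2 X -> f1 Y = f2 Y ->
  {in S, forall g, f1 (iota g) = f2 (iota g)} -> f1 =1 f2.
Proof.
move=> hf1 hf2 eX eY eI.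
have [_ uniq_f] := hH.2 B _ _ _ (CBH_rel_hom hH.1 hf1).
apply: (uniq_f _ _ hf1 hf2); first by split.
by split=> [||g gS] /=; rewrite ?eX ?eY ?eI.
Qed.

Lemma CBH_hom_unique_gens (B : algType F) (X' Y' : B) (iota' : 'M[F]_2 -> B)
    (f1 f2 : H -> B) :
  alg_hom f1 -> alg_hom f2 -> on_gens S f1 X Y iota X' Y' iota' ->
  on_gens S f2 X Y iota X' Y' iota' -> f1 =1 f2.
Proof.
move=> hf1 hf2 [f1X f1Y f1I] [f2X f2Y f2I].
apply: (CBH_hom_unique hf1 hf2) => [||g gS]; first by rewrite f1X f2X.
  by rewrite f1Y f2Y.
by rewrite f1I ?f2I.
Qed.

End UniversalProperty.

(* Indexed by [hP] so that the instances below may depend on it. *)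
Record subalg (F : fieldType) (A : algType F) (P : A -> bool)
    (hP : GRing.subsemialg_closed P) : Type :=
  SubAlg { subalg_val :> A; _ : P subalg_val }.

Section Subalgebra.
Variables (F : fieldType) (A : algType F) (P : A -> bool).
Hypothesis hP : GRing.subsemialg_closed P.
HB.instance Definition _ := GRing.isSubalgClosed.Build F A P hP.
HB.instance Definition _ := [isSub for @subalg_val F A P hP].
HB.instance Definition _ := [Choice of subalg hP by <:].
HB.instance Definition _ := [SubChoice_isSubAlgebra of subalg hP by <:].

Lemma subalg_val_hom : alg_hom (@subalg_val F A P hP : subalg hP -> A).
Proof. by []. Qed.
End Subalgebra.

Section Generation.
Variables (F : fieldType) (H : algType F) (S : seq 'M[F]_2) (c : 'M[F]_2 -> F).
Variables (X Y : H) (iota : 'M[F]_2 -> H).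
Hypothesis hH : is_CBH S c X Y iota.
Variables (P : H -> bool) (hP : GRing.subsemialg_closed P).
Hypotheses (PX : P X) (PY : P Y) (PI : {in S, forall g, P (iota g)}).

Let iotaP g : subalg hP := insubd (1 : subalg hP) (iota g).

Let val_iotaP g : P (iota g) -> val (iotaP g) = iota g.
Proof. by move=> Pg; rewrite insubdK. Qed.

Let val_hom : alg_hom (val : subalg hP -> H). Proof. exact: subalg_val_hom. Qed.

Lemma CBH_rel_subalg : CBH_rel S c (SubAlg hP PX) (SubAlg hP PY) iotaP.
Proof.
have val_iotaPS g : g \in S -> val (iotaP g) = iota g by move/PI/val_iotaP.
case: hH.1 => iota1 iotaM iotaX iotaY comm; split.
- by apply: val_inj; rewrite (alg_hom1 val_hom) val_iotaP ?iota1 //; apply: rpred1.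
- move=> g h gS hS; have Pgh : P (iota (g * h)).
    by rewrite iotaM //; apply: rpredM; apply: PI.
  by apply: val_inj; rewrite (alg_homM val_hom) (val_iotaP Pgh) !val_iotaPS // iotaM.
- move=> g gS; apply: val_inj; rewrite !(alg_homM val_hom) (alg_homD val_hom).
  by rewrite !(alg_homZ val_hom) /= val_iotaPS ?iotaX.
- move=> g gS; apply: val_inj; rewrite !(alg_homM val_hom) (alg_homD val_hom).
  by rewrite !(alg_homZ val_hom) /= val_iotaPS ?iotaY.
- apply: val_inj; rewrite (alg_homB val_hom) !(alg_homM val_hom) (alg_hom_sum val_hom).
  rewrite comm big_seq [RHS]big_seq; apply: eq_bigr => g gS.
  by rewrite (alg_homZ val_hom) val_iotaPS.
Qed.

(* By initiality, H factors through any subalgebra containing the generators. *)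
Lemma CBH_subalg_full x : P x.
Proof.
have [f [hf [fX fY fI]]] := CBH_hom_exists hH CBH_rel_subalg.
have valf_id : val \o f =1 id.
  apply: (CBH_hom_unique hH (alg_hom_comp hf val_hom) (alg_hom_id H)) => /=.
  - by rewrite fX.
  - by rewrite fY.
  - by move=> g gS; rewrite fI // val_iotaP ?PI.
by rewrite -(valf_id x); apply: valP.
Qed.

End Generation.

Lemma word_nil (F : fieldType) (A : algType F) (X Y : A) : word X Y [::] = 1.
Proof. by rewrite /word big_nil. Qed.

Lemma word_cons (F : fieldType) (A : algType F) (X Y : A) b w :
  word X Y (b :: w) = (if b then X else Y) * word X Y w.
Proof. by rewrite /word big_cons. Qed.

Section Filtration.
Variables (F : fieldType) (A : algType F) (S : seq 'M[F]_2) (X Y : A).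
Variable iota : 'M[F]_2 -> A.
Local Notation fl := (filt S X Y iota).

Lemma alg_hom_word (B : algType F) (f : A -> B) w : alg_hom f ->
  f (word X Y w) = word (f X) (f Y) w.
Proof.
move=> hf; elim: w => [|b w IHw]; first by rewrite !word_nil (alg_hom1 hf).
by rewrite !word_cons (alg_homM hf) IHw; case: b.
Qed.

Lemma filt0 n : fl n 0.
Proof. by exists [::]; rewrite big_nil. Qed.

Lemma filtD n a b : fl n a -> fl n b -> fl n (a + b).
Proof.
by move=> [s [hs ->]] [t [ht ->]]; exists (s ++ t); rewrite all_cat hs ht big_cat.
Qed.

Lemma filtZ n k a : fl n a -> fl n (k *: a).
Proof.
move=> [s [hs ->]]; exists (map (fun t => (k * t.1, t.2)) s).
rewrite all_map big_map scaler_sumr; split; first exact: sub_all hs.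
by apply: eq_bigr => t _; rewrite scalerA.
Qed.

Lemma filt_sum n I (r : seq I) (P : pred I) (u : I -> A) :
  (forall i, P i -> fl n (u i)) -> fl n (\sum_(i <- r | P i) u i).
Proof. by apply: (big_ind (fl n)); [exact: filt0 | exact: filtD]. Qed.

Lemma filt_le m n a : (m <= n)%N -> fl m a -> fl n a.
Proof.
move=> mn [s [hs ->]]; exists s; split=> //.
by apply: sub_all hs => t /andP [wm ->]; rewrite (leq_trans wm mn).
Qed.

Lemma filt_word n w g : (size w <= n)%N -> g \in S -> fl n (word X Y w * iota g).
Proof.
by move=> wn gS; exists [:: (1, (w, g))]; rewrite /= wn gS big_seq1 scale1r.
Qed.

Lemma filt_vecXY_mull n u a : fl n a -> fl n.+1 (vecXY X Y u * a).
Proof.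
move=> [s [hs ->]]; rewrite mulr_sumr big_seq; apply: filt_sum => t ts.
have /andP [wn tS] := allP hs t ts.
rewrite -scalerAr; apply: filtZ; rewrite /vecXY mulrDl -!scalerAl !mulrA.
have -> : X * word X Y t.2.1 = word X Y (true :: t.2.1) by rewrite word_cons.
have -> : Y * word X Y t.2.1 = word X Y (false :: t.2.1) by rewrite word_cons.
by apply: filtD; apply: filtZ; apply: filt_word.
Qed.

Lemma filt_mulr_iota n a g : {in S &, forall g h, iota (g * h) = iota g * iota h} ->
  {in S &, forall g h, g * h \in S} -> g \in S -> fl n a -> fl n (a * iota g).
Proof.
move=> iotaM SM gS [s [hs ->]]; rewrite mulr_suml big_seq; apply: filt_sum => t ts.
have /andP [wn tS] := allP hs t ts.
by rewrite -scalerAl; apply: filtZ; rewrite -mulrA -iotaM //; apply: filt_word; rewrite ?SM.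
Qed.

End Filtration.

Section Quotient.
Variable F : fieldType.
Variables (G K : seq 'M[F]_2) (c : 'M[F]_2 -> F).
Variables (H : algType F) (X Y : H) (iota : 'M[F]_2 -> H).
Variables (H' : algType F) (X' Y' : H') (iota' : 'M[F]_2 -> H').
Hypotheses (hG : finite_subgroup_SL2 G) (hK : normal_subgroup K G).
Hypotheses (hc : central_one G c) (hcK : in_group_algebra K c).
Hypotheses (hH : is_CBH G c X Y iota) (hH' : is_CBH K c X' Y' iota').
Hypothesis char0 : has_pchar0 F.

Local Notation e := (avg_idem G iota).
Local Notation e' := (avg_idem K iota').

Let grpG := SL2_mxgroup hG.
Let grpK := normal_mxgroup hG hK.
Let KG := normal_subgroup_subset hK.

Let uG : uniq G. Proof. by case: grpG. Qed.
Let G1 : 1 \in G. Proof. by case: grpG. Qed.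
Let GM : {in G &, forall g h, g * h \in G}. Proof. by case: grpG. Qed.
Let GV : {in G, forall g, g^-1 \in G}. Proof. by case: grpG. Qed.
Let GU : {in G, forall g, g \is a GRing.unit}. Proof. by case: grpG. Qed.
Let uK : uniq K. Proof. by case: grpK. Qed.
Let K1 : 1 \in K. Proof. by case: grpK. Qed.
Let KM : {in K &, forall g h, g * h \in K}. Proof. by case: grpK. Qed.
Let KV : {in K, forall g, g^-1 \in K}. Proof. by case: grpK. Qed.
Let KU : {in K, forall g, g \is a GRing.unit}. Proof. by case: grpK. Qed.

Let Kconj g k : g \in G -> k \in K -> g * k * g^-1 \in K.
Proof. by case: hK => _ nKG; apply: nKG. Qed.

Let KconjV g k : g \in G -> k \in K -> g^-1 * k * g \in K.
Proof. by move=> gG kK; rewrite -{2}(invrK g) Kconj ?GV. Qed.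

Let detG g : g \in G -> \det g = 1.
Proof. by case: hG => _ _ _ _; apply. Qed.

Let size_G_neq0 : (size G)%:R != 0 :> F. Proof. exact: natr_size_neq0 char0 G1. Qed.
Let size_K_neq0 : (size K)%:R != 0 :> F. Proof. exact: natr_size_neq0 char0 K1. Qed.

Let c_conj g k : g \in G -> c (g * k * g^-1) = c k.
Proof.
move=> gG; case: hc => [[_ c_central] _].
have invmxE (M : 'M[F]_2) : invmx M = M^-1 by [].
have := c_central _ (GV gG) (k * g^-1); rewrite !invmxE invrK -mulrA => ->.
by rewrite divrK ?GU.
Qed.

Let sum_c_conj (V : lmodType F) (u : 'M[F]_2 -> V) g : g \in G ->
  \sum_(k <- K) c k *: u (g * k * g^-1) = \sum_(k <- K) c k *: u k.
Proof.
move=> gG; rewrite -[RHS](sum_conj_normal (fun k => c k *: u k) uK (GU gG)).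
  by apply: eq_bigr => k _; rewrite c_conj.
by move=> k; apply: Kconj.
Qed.

Let sum_c_restrict (V : lmodType F) (u : 'M[F]_2 -> V) :
  \sum_(g <- G) c g *: u g = \sum_(g <- K) c g *: u g.
Proof.
by apply: (sum_restrict_support uG uK KG) => g /hcK ->; rewrite scale0r.
Qed.

Lemma CBH_rel_restrict : CBH_rel K c X Y iota.
Proof.
case: hH.1 => iota1 iotaM iotaX iotaY comm; split=> //.
- by move=> g h /KG gG /KG hG'; apply: iotaM.
- by move=> g /KG; apply: iotaX.
- by move=> g /KG; apply: iotaY.
- by rewrite comm; apply: sum_c_restrict.
Qed.

Let e_idem : e * e = e.
Proof. exact: avg_idem_idem grpG (CBH_relM hH.1) size_G_neq0. Qed.
Let e_mull g : g \in G -> iota g * e = e.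
Proof. by move=> gS; exact: (avg_idem_mull grpG (CBH_relM hH.1) gS). Qed.
Let e_mulr g : g \in G -> e * iota g = e.
Proof. by move=> gS; exact: (avg_idem_mulr grpG (CBH_relM hH.1) gS). Qed.
Let e'_idem : e' * e' = e'.
Proof. exact: avg_idem_idem grpK (CBH_relM hH'.1) size_K_neq0. Qed.
Let e'_mull h : h \in K -> iota' h * e' = e'.
Proof. by move=> gS; exact: (avg_idem_mull grpK (CBH_relM hH'.1) gS). Qed.
Let e'_mulr h : h \in K -> e' * iota' h = e'.
Proof. by move=> gS; exact: (avg_idem_mulr grpK (CBH_relM hH'.1) gS). Qed.

Definition actX g := vecXY X' Y' (g *m ex).
Definition actY g := vecXY X' Y' (g *m ey).
Definition act_iota g h := iota' (g * h * g^-1).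

Lemma CBH_rel_act g : g \in G -> CBH_rel K c (actX g) (actY g) (act_iota g).
Proof.
move=> gG; have gU := GU gG; have hR := hH'.1; split.
- by rewrite /act_iota mulr1 divrr // (CBH_rel1 hR).
- by move=> h k hK' kK; rewrite /act_iota -(CBH_relM hR) ?Kconj // !mulrA divrK.
- move=> h hK'; rewrite (CBH_rel_twist hR ex (Kconj gG hK') (divrK gU (g * h))).
  by rewrite vecXY_mulmx !mulmx_exE.
- move=> h hK'; rewrite (CBH_rel_twist hR ey (Kconj gG hK') (divrK gU (g * h))).
  by rewrite vecXY_mulmx !mulmx_eyE.
- by rewrite commr_vecXY detG // scale1r (CBH_rel_comm hR) -(sum_c_conj iota' gG).
Qed.

Lemma act_exists : exists alpha : 'M[F]_2 -> H' -> H', forall g, g \in G ->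
  alg_hom (alpha g) /\ on_gens K (alpha g) X' Y' iota' (actX g) (actY g) (act_iota g).
Proof.
have /boolp.choice [alpha alpha_spec] : forall g, exists f : H' -> H', g \in G ->
    alg_hom f /\ on_gens K f X' Y' iota' (actX g) (actY g) (act_iota g).
  move=> g; case: (boolP (g \in G)) => [gG|_]; last by exists id.
  by have [f hf] := CBH_hom_exists hH' (CBH_rel_act gG); exists f.
by exists alpha.
Qed.

Section Action.
Variable alpha : 'M[F]_2 -> H' -> H'.
Hypothesis alpha_spec : forall g, g \in G ->
  alg_hom (alpha g) /\ on_gens K (alpha g) X' Y' iota' (actX g) (actY g) (act_iota g).

Lemma act_hom g : g \in G -> alg_hom (alpha g). Proof. by case/alpha_spec. Qed.
Lemma act_X g : g \in G -> alpha g X' = actX g. Proof. by case/alpha_spec => _ []. Qed.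
Lemma act_Y g : g \in G -> alpha g Y' = actY g. Proof. by case/alpha_spec => _ []. Qed.
Lemma act_iotaE g h : g \in G -> h \in K -> alpha g (iota' h) = act_iota g h.
Proof. by case/alpha_spec => _ [_ _ act_iota_gens] /act_iota_gens. Qed.

Lemma act_vecXY g u : g \in G -> alpha g (vecXY X' Y' u) = vecXY X' Y' (g *m u).
Proof.
move=> gG; rewrite vecXY_mulmx {1}/vecXY (alg_homD (act_hom gG)).
by rewrite !(alg_homZ (act_hom gG)) act_X // act_Y.
Qed.

Lemma act1 : alpha 1 =1 id.
Proof.
apply: (CBH_hom_unique hH' (act_hom G1) (alg_hom_id H')).
- by rewrite act_X ?G1 // /actX mul1mx vecXY_ex.
- by rewrite act_Y ?G1 // /actY mul1mx vecXY_ey.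
- by move=> h hK'; rewrite act_iotaE ?G1 // /act_iota invr1 mulr1 mul1r.
Qed.

Lemma actM g h : g \in G -> h \in G -> alpha (g * h) =1 alpha g \o alpha h.
Proof.
move=> gG hG'; have ghG := GM gG hG'.
apply: (CBH_hom_unique hH' (act_hom ghG) (alg_hom_comp (act_hom hG') (act_hom gG))) => /=.
- by rewrite !act_X // /actX act_vecXY // mulmxA.
- by rewrite !act_Y // /actY act_vecXY // mulmxA.
- move=> k kK; rewrite act_iotaE // act_iotaE // /act_iota act_iotaE ?Kconj // /act_iota.
  by rewrite invrM ?GU // !mulrA.
Qed.

Lemma act_bij g : g \in G -> bijective (alpha g).
Proof.
move=> gG; have gVG := GV gG; exists (alpha g^-1) => a; apply/esym.
  by have := actM gVG gG a; rewrite mulVr ?GU // act1.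
by have := actM gG gVG a; rewrite mulrV ?GU // act1.
Qed.

Lemma act_e' g : g \in G -> alpha g e' = e'.
Proof.
move=> gG; rewrite /avg_idem (alg_homZ (act_hom gG)) (alg_hom_sum (act_hom gG)).
congr (_ *: _); rewrite big_seq (eq_bigr (fun k => iota' (g * k * g^-1))) => [|k kK].
  by rewrite -big_seq (sum_conj_normal iota' uK (GU gG) (fun k kK => Kconj gG kK)).
by rewrite act_iotaE.
Qed.

Lemma act_spherical g a : g \in G -> spherical e' a -> spherical e' (alpha g a).
Proof.
by move=> gG sa; rewrite /spherical -(act_e' gG) -!(alg_homM (act_hom gG)) sa.
Qed.

(* An element of K acts on H' as conjugation by iota' h, which e' absorbs. *)
Lemma act_normal_fixed h a : h \in K -> spherical e' a -> alpha h a = a.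
Proof.
move=> hK' sa; have hG' := KG hK'; have [hU hVK] := (KU hK', KV hK').
have [iV Vi] := CBH_rel_inv hH'.1 hK' hU hVK.
rewrite (CBH_hom_unique hH' (act_hom hG') (alg_hom_conj iV Vi)) /=.
- by rewrite -{1}sa !mulrA e'_mull // -mulrA e'_mulr // sa.
- by rewrite act_X // (CBH_rel_conjX hH'.1).
- by rewrite act_Y // (CBH_rel_conjY hH'.1).
- move=> k kK; rewrite act_iotaE // /act_iota (CBH_relM hH'.1 (KM hK' kK) hVK).
  by rewrite (CBH_relM hH'.1 hK' kK).
Qed.

Definition sph_fixed a := spherical e' a /\ {in G, forall g, alpha g a = a}.

Lemma sph_fixedM a b : sph_fixed a -> sph_fixed b -> sph_fixed (a * b).
Proof.
move=> [sa fa] [sb fb]; split=> [|g gG]; last by rewrite (alg_homM (act_hom gG)) fa ?fb.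
by rewrite /spherical mulrA (spherical_mull e'_idem sa) -mulrA (spherical_mulr e'_idem sb).
Qed.

Lemma sandwich_fixed a : {in G, forall g, alpha g a = a} -> sph_fixed (e' * a * e').
Proof.
move=> fa; split=> [|g gG]; first exact: spherical_sandwich e'_idem.
by rewrite !(alg_homM (act_hom gG)) act_e' ?fa.
Qed.

Definition act_avg a := (size G)%:R^-1 *: \sum_(g <- G) alpha g a.

Lemma act_avg_fixed a : {in G, forall g, alpha g (act_avg a) = act_avg a}.
Proof.
move=> h hG'; rewrite /act_avg (alg_homZ (act_hom hG')) (alg_hom_sum (act_hom hG')).
congr (_ *: _); rewrite big_seq (eq_bigr (fun g => alpha (h * g) a)) => [|g gG].
  by rewrite -big_seq (sum_mxgroup_mull (fun g => alpha g a) grpG hG').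
by rewrite actM.
Qed.

Section Restriction.
Variable j : H' -> H.
Hypotheses (hj : alg_hom j) (j_gens : on_gens K j X' Y' iota' X Y iota).

Lemma j_X : j X' = X. Proof. by case: j_gens. Qed.
Lemma j_Y : j Y' = Y. Proof. by case: j_gens. Qed.
Lemma j_iota h : h \in K -> j (iota' h) = iota h. Proof. by case: j_gens => _ _; apply. Qed.

Lemma j_vecXY u : j (vecXY X' Y' u) = vecXY X Y u.
Proof. by rewrite /vecXY (alg_homD hj) !(alg_homZ hj) j_X j_Y. Qed.

Lemma j_act g a : g \in G -> j (alpha g a) = iota g * j a * iota g^-1.
Proof.
move=> gG; have [gU gVG] := (GU gG, GV gG).
have [iV Vi] := CBH_rel_inv hH.1 gG gU gVG.
apply: (CBH_hom_unique hH' (alg_hom_comp (act_hom gG) hj)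
                            (alg_hom_comp hj (alg_hom_conj iV Vi))) => /=.
- by rewrite act_X // j_vecXY j_X (CBH_rel_conjX hH.1).
- by rewrite act_Y // j_vecXY j_Y (CBH_rel_conjY hH.1).
- move=> k kK; have kG := KG kK.
  rewrite act_iotaE // /act_iota j_iota ?(Kconj gG kK) // j_iota //.
  by rewrite (CBH_relM hH.1 (GM gG kG) gVG) (CBH_relM hH.1 gG kG).
Qed.

Lemma iota_mul_j g a : g \in G -> iota g * j a = j (alpha g a) * iota g.
Proof.
move=> gG; have [_ Vi] := CBH_rel_inv hH.1 gG (GU gG) (GV gG).
by rewrite j_act // -mulrA Vi mulr1.
Qed.

Lemma e_comm_fixed a : sph_fixed a -> e * j a = j a * e.
Proof.
move=> [_ fa]; rewrite /avg_idem -scalerAl -scalerAr mulr_suml mulr_sumr.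
congr (_ *: _); rewrite big_seq [RHS]big_seq; apply: eq_bigr => g gG.
by rewrite iota_mul_j ?fa.
Qed.

Lemma j_e' : j e' = avg_idem K iota.
Proof.
rewrite /avg_idem (alg_homZ hj) (alg_hom_sum hj); congr (_ *: _).
by rewrite big_seq [RHS]big_seq; apply: eq_bigr => k kK; rewrite j_iota.
Qed.

Lemma e_j_e' : e * j e' = e.
Proof. by rewrite j_e' (avg_idem_absorbr size_K_neq0) // => k /KG; apply: e_mulr. Qed.

Lemma j_e'_e : j e' * e = e.
Proof. by rewrite j_e' (avg_idem_absorbl size_K_neq0) // => k /KG; apply: e_mull. Qed.

Definition phi a := e * j a * e.

Lemma phi_spherical a : spherical e (phi a).
Proof. exact: spherical_sandwich e_idem. Qed.

Lemma phi_fixed a : sph_fixed a -> phi a = j a * e.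
Proof. by move=> fa; rewrite /phi e_comm_fixed // -mulrA e_idem. Qed.

Lemma phi_e' : phi e' = e.
Proof. by rewrite /phi e_j_e' e_idem. Qed.

Lemma phi_lin k a b : phi (k *: a + b) = k *: phi a + phi b.
Proof.
by rewrite /phi (alg_homD hj) (alg_homZ hj) mulrDr mulrDl -(scalerAr k e) -scalerAl.
Qed.

Lemma phiM a b : sph_fixed a -> sph_fixed b -> phi (a * b) = phi a * phi b.
Proof.
move=> fa fb; have fab := sph_fixedM fa fb.
rewrite !phi_fixed // (alg_homM hj) [RHS]mulrA.
by rewrite -[j a * e * j b]mulrA e_comm_fixed // !mulrA -[RHS]mulrA e_idem.
Qed.

Lemma phi_sandwich a : phi (e' * a * e') = phi a.
Proof. by rewrite /phi !(alg_homM hj) !mulrA e_j_e' -!mulrA j_e'_e. Qed.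

Lemma phi_act_avg a : phi (act_avg a) = phi a.
Proof.
rewrite /phi /act_avg (alg_homZ hj) (alg_hom_sum hj) sandwich_scale_sum.
rewrite big_seq (eq_bigr (fun=> e * j a * e)) => [|g gG].
  by rewrite -big_seq avg_const ?size_G_neq0.
by rewrite j_act // !mulrA e_mulr // -[_ * iota g^-1 * e]mulrA e_mull ?GV.
Qed.

Definition j_span (x : H) := exists s : seq (H' * 'M[F]_2),
  all (fun t => t.2 \in G) s /\ x = \sum_(t <- s) j t.1 * iota t.2.

Lemma j_spanM x y : j_span x -> j_span y -> j_span (x * y).
Proof.
move=> [s [sG ->]] [t [tG ->]].
exists [seq (u.1 * alpha u.2 v.1, u.2 * v.2) | u <- s, v <- t]; split.
  apply/allP => w /allpairsP [[u v] [us vt ->]] /=.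
  by apply: GM; [exact: (allP sG) | exact: (allP tG)].
rewrite big_allpairs_dep mulr_suml big_seq [RHS]big_seq; apply: eq_bigr => u us.
rewrite mulr_sumr big_seq [RHS]big_seq; apply: eq_bigr => v vt /=.
have [u2G v2G] := (allP sG u us, allP tG v vt).
rewrite (alg_homM hj) (CBH_relM hH.1) // !mulrA -[_ * iota u.2 * _]mulrA.
by rewrite iota_mul_j // !mulrA.
Qed.

Lemma j_span_closed : GRing.subsemialg_closed (fun x => boolp.asbool (j_span x)).
Proof.
split.
- apply/boolp.asboolP; exists [:: (1, 1)]; rewrite /= G1 big_seq1.
  by rewrite (alg_hom1 hj) (CBH_rel1 hH.1) mulr1.
- split=> [|x y /boolp.asboolP [s [sG ->]] /boolp.asboolP [t [tG ->]]].
    by apply/boolp.asboolP; exists [::]; rewrite big_nil.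
  by apply/boolp.asboolP; exists (s ++ t); rewrite all_cat sG tG big_cat.
- move=> k x /boolp.asboolP [s [sG ->]]; apply/boolp.asboolP.
  exists (map (fun t => (k *: t.1, t.2)) s); rewrite all_map big_map scaler_sumr.
  by split=> //; apply: eq_bigr => t _; rewrite (alg_homZ hj) scalerAl.
- by move=> x y /boolp.asboolP jx /boolp.asboolP jy; apply/boolp.asboolP/j_spanM.
Qed.

Lemma j_span_full x : j_span x.
Proof.
apply/boolp.asboolP; apply: (CBH_subalg_full hH j_span_closed).
- apply/boolp.asboolP; exists [:: (X', 1)].
  by rewrite /= G1 big_seq1 j_X (CBH_rel1 hH.1) mulr1.
- apply/boolp.asboolP; exists [:: (Y', 1)].
  by rewrite /= G1 big_seq1 j_Y (CBH_rel1 hH.1) mulr1.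
- move=> g gG; apply/boolp.asboolP; exists [:: (1, g)].
  by rewrite /= gG big_seq1 (alg_hom1 hj) mul1r.
Qed.

Lemma spherical_phi_image b : spherical e b -> exists a, phi a = b.
Proof.
move=> <-; have [s [sG ->]] := j_span_full b; exists (\sum_(t <- s) t.1).
rewrite /phi (alg_hom_sum hj) mulr_sumr mulr_suml mulr_sumr mulr_suml.
rewrite big_seq [RHS]big_seq; apply: eq_bigr => t ts.
by rewrite -!mulrA e_mull ?(allP sG t ts).
Qed.

Lemma phi_surj b : spherical e b -> exists2 a, sph_fixed a & phi a = b.
Proof.
move=> /spherical_phi_image [a <-]; exists (e' * act_avg a * e').
  exact/sandwich_fixed/act_avg_fixed.
by rewrite phi_sandwich phi_act_avg.
Qed.

Lemma j_filt n a : filt K X' Y' iota' n a -> filt G X Y iota n (j a).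
Proof.
move=> [s [hs ->]]; rewrite (alg_hom_sum hj) big_seq; apply: filt_sum => t ts.
have /andP [wn tK] := allP hs t ts.
rewrite (alg_homZ hj) (alg_homM hj) alg_hom_word // j_X j_Y j_iota //.
by apply/filtZ/filt_word; rewrite ?KG.
Qed.

Lemma phi_filt n a : sph_fixed a -> filt K X' Y' iota' n a -> filt G X Y iota n (phi a).
Proof.
move=> fa /j_filt ja; rewrite phi_fixed // /avg_idem -scalerAr mulr_sumr.
apply/filtZ; rewrite big_seq; apply: filt_sum => g gG.
exact: filt_mulr_iota (CBH_relM hH.1) GM gG ja.
Qed.

Section Induced.
Variable rs : seq 'M[F]_2.
Hypothesis rsT : left_transversal K G rs.

Definition ncos := (size rs).-1.

Lemma size_rs : size rs = ncos.+1.
Proof.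
case: rsT => _ _ rs1 _ _; rewrite /ncos prednK // lt0n size_eq0.
by apply: contraTneq rs1 => ->.
Qed.

Definition rep (i : 'I_ncos.+1) := nth 1 rs i.

Let rep_rs i : rep i \in rs. Proof. by rewrite mem_nth // size_rs. Qed.
Let rep_G i : rep i \in G. Proof. by case: rsT => _ rsG _ _ _; apply/rsG/rep_rs. Qed.
Let rep_U i : rep i \is a GRing.unit. Proof. exact/GU/rep_G. Qed.
Let repV_G i : (rep i)^-1 \in G. Proof. exact/GV/rep_G. Qed.

Lemma rep_inj i i' : (rep i)^-1 * rep i' \in K -> i = i'.
Proof.
case: rsT => urs _ _ rs_cos _ /(rs_cos _ _ (rep_rs i) (rep_rs i')) /eqP.
by rewrite nth_uniq ?size_rs // => /eqP /val_inj.
Qed.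

Fact index1_lt : (index 1%R rs < ncos.+1)%N.
Proof. by rewrite -size_rs index_mem; case: rsT. Qed.

Definition i1 : 'I_ncos.+1 := Ordinal index1_lt.

Lemma rep_i1 : rep i1 = 1.
Proof. by rewrite /rep /= nth_index //; case: rsT. Qed.

Lemma rep_exists g i : g \in G -> exists i', (rep i')^-1 * g * rep i \in K.
Proof.
move=> gG; case: rsT => _ _ _ _ rs_cover; have [r r_rs rK] := rs_cover _ (GM gG (rep_G i)).
have r_lt : (index r rs < ncos.+1)%N by rewrite -size_rs index_mem.
by exists (Ordinal r_lt); rewrite /rep /= nth_index // -mulrA.
Qed.

Lemma rep_unique g i i1' i2' : (rep i1')^-1 * g * rep i \in K ->
  (rep i2')^-1 * g * rep i \in K -> i1' = i2'.
Proof.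
move=> k1K k2K; apply: rep_inj.
have -> : (rep i1')^-1 * rep i2' =
    ((rep i1')^-1 * g * rep i) * ((rep i2')^-1 * g * rep i)^-1.
  by apply: (mulIr (KU k2K)); rewrite divrK ?KU // !mulrA mulrK ?rep_U.
by apply: KM k1K _; apply: KV.
Qed.

Lemma rep_normal h i i' : h \in K -> ((rep i)^-1 * h * rep i' \in K) = (i == i').
Proof.
move=> hK'; apply/idP/eqP => [hii'|<-]; last by apply: KconjV; rewrite ?rep_G.
by apply: rep_unique hii' _; apply: KconjV; rewrite ?rep_G.
Qed.

Local Notation MH := (mxalg H' ncos).

(* The G-action on the induced module H' (x)_{F K} F G, written in the basis rs. *)
Definition ind_vec u : MH := diag_of (fun i => vecXY X' Y' ((rep i)^-1 *m u)).

Definition ind_iota g : MH := \matrix_(i, i')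
  if (rep i)^-1 * g * rep i' \in K then iota' ((rep i)^-1 * g * rep i') else 0.

Lemma ind_iotaE g i i' : ind_iota g i i' =
  if (rep i)^-1 * g * rep i' \in K then iota' ((rep i)^-1 * g * rep i') else 0.
Proof. by rewrite mxE. Qed.

Lemma ind_vec_decomp v : ind_vec v = v 0 0 *: ind_vec ex + v 1 0 *: ind_vec ey.
Proof. by rewrite !diag_ofZ diag_ofD; apply: eq_diag_of => i; rewrite vecXY_mulmx. Qed.

Lemma ind_iota1 : ind_iota 1 = 1.
Proof.
apply/matrixP=> i i'; rewrite ind_iotaE mxalg_oneE mulr1.
case: (eqVneq i i') => [<-|/negbTE nii'].
  by rewrite mulVr ?rep_U // K1 (CBH_rel1 hH'.1).
by case: ifP => // /rep_inj eii'; rewrite eii' eqxx in nii'.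
Qed.

Lemma ind_iotaM : {in G &, forall g h, ind_iota (g * h) = ind_iota g * ind_iota h}.
Proof.
move=> g h gG hG'; apply/matrixP=> i i'; rewrite mxalg_mulE.
have [l lK] := rep_exists i' hG'.
rewrite (bigD1 l) //= big1 ?addr0 => [|l' /negbTE l'l]; last first.
  rewrite (ind_iotaE h); case: ifP => [l'K|_]; last by rewrite mulr0.
  by rewrite (rep_unique l'K lK) eqxx in l'l.
have gh_split : (rep i)^-1 * (g * h) * rep i' =
    ((rep i)^-1 * g * rep l) * ((rep l)^-1 * h * rep i').
  by rewrite !mulrA mulrK ?rep_U.
rewrite (ind_iotaE h) lK (ind_iotaE g); case: ifP => [glK|/negbT glK].
  by rewrite ind_iotaE gh_split (KM glK lK) (CBH_relM hH'.1 glK lK).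
rewrite ind_iotaE gh_split mul0r ifF //; apply: contraNF glK => ghK.
by rewrite -(mulrK (KU lK) ((rep i)^-1 * g * rep l)) KM ?KV.
Qed.

Lemma ind_iota_vec g u : g \in G ->
  ind_iota g * ind_vec u = ind_vec (g *m u) * ind_iota g.
Proof.
move=> gG; apply/matrixP=> i i'; rewrite mul_mx_diag_of mul_diag_of_mx ind_iotaE.
case: ifP => kK; last by rewrite mul0r mulr0.
by rewrite (CBH_rel_twist hH'.1 u kK (mulrK (rep_U i') _)).
Qed.

Lemma ind_comm :
  ind_vec ex * ind_vec ey - ind_vec ey * ind_vec ex = \sum_(g <- G) c g *: ind_iota g.
Proof.
apply/matrixP=> i i'; rewrite !diag_ofM summxE mxalg_subE !diag_ofE.
rewrite (eq_bigr (fun g => c g *: ind_iota g i i')) => [|g _]; last exact: mxalg_scaleE.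
rewrite (sum_c_restrict (fun g => ind_iota g i i')).
case: (eqVneq i i') => [<-|/negbTE nii']; last first.
  by rewrite subr0 big_seq big1 // => k kK; rewrite ind_iotaE rep_normal // nii' scaler0.
rewrite commr_vecXY detG ?repV_G // scale1r (CBH_rel_comm hH'.1).
rewrite -(sum_c_conj iota' (repV_G i)) big_seq [RHS]big_seq; apply: eq_bigr => k kK.
by rewrite ind_iotaE invrK KconjV ?rep_G.
Qed.

Lemma CBH_rel_ind : CBH_rel G c (ind_vec ex) (ind_vec ey) ind_iota.
Proof.
split; [exact: ind_iota1 | exact: ind_iotaM | | | exact: ind_comm].
- by move=> g gG; rewrite ind_iota_vec // [ind_vec _]ind_vec_decomp !mulmx_exE.
- by move=> g gG; rewrite ind_iota_vec // [ind_vec _]ind_vec_decomp !mulmx_eyE.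
Qed.

Variable psi : H -> MH.
Hypotheses (hpsi : alg_hom psi)
  (psi_gens : on_gens G psi X Y iota (ind_vec ex) (ind_vec ey) ind_iota).

Definition act_diag a : MH := diag_of (fun i => alpha (rep i)^-1 a).

Lemma act_diag_hom : alg_hom act_diag.
Proof.
split=> [|a b|k a b].
- by rewrite -diag_of1; apply: eq_diag_of => i; rewrite (alg_hom1 (act_hom (repV_G i))).
- by rewrite diag_ofM; apply: eq_diag_of => i; rewrite (alg_homM (act_hom (repV_G i))).
- rewrite diag_ofZ diag_ofD; apply: eq_diag_of => i.
  by rewrite (alg_homD (act_hom (repV_G i))) (alg_homZ (act_hom (repV_G i))).
Qed.

Lemma psi_j a : psi (j a) = act_diag a.
Proof.
case: psi_gens => psiX psiY psi_iota.
apply: (CBH_hom_unique hH' (alg_hom_comp hj hpsi) act_diag_hom) => /=.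
- by rewrite j_X psiX; apply: eq_diag_of => i; rewrite act_X ?repV_G.
- by rewrite j_Y psiY; apply: eq_diag_of => i; rewrite act_Y ?repV_G.
- move=> h hK'; rewrite j_iota // psi_iota ?KG //; apply/matrixP=> i i'.
  rewrite ind_iotaE diag_ofE rep_normal //; case: eqP => [<-|//].
  by rewrite act_iotaE ?repV_G // /act_iota invrK.
Qed.

Lemma psi_e : psi e i1 i1 = ((size K)%:R / (size G)%:R) *: e'.
Proof.
case: psi_gens => _ _ psi_iota.
rewrite /avg_idem (alg_homZ hpsi) (alg_hom_sum hpsi) mxalg_scaleE summxE.
rewrite big_seq (eq_bigr (fun g => if g \in K then iota' g else 0)) => [|g gG]; last first.
  by rewrite psi_iota // ind_iotaE rep_i1 invr1 mul1r mulr1.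
rewrite -big_seq (sum_restrict_support uG uK KG) => [|g /negbTE -> //].
rewrite big_seq (eq_bigr iota') => [|g ->] //; rewrite -big_seq scalerA.
by rewrite [_ / _ / _]mulrAC mulfV ?size_K_neq0 // mul1r.
Qed.

Lemma psi_phi a : sph_fixed a ->
  psi (phi a) i1 i1 = ((size K)%:R / (size G)%:R) *: a.
Proof.
move=> fa; rewrite phi_fixed // (alg_homM hpsi) psi_j mul_diag_of_mx rep_i1 invr1.
by rewrite act1 psi_e -scalerAr (spherical_mulr e'_idem fa.1).
Qed.

Lemma index_ratio_neq0 : (size K)%:R / (size G)%:R != 0 :> F.
Proof. by rewrite mulf_neq0 ?invr_eq0 ?size_G_neq0 ?size_K_neq0. Qed.

Lemma phi_inj a b : sph_fixed a -> sph_fixed b -> phi a = phi b -> a = b.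
Proof.
move=> fa fb /(congr1 (fun x => psi x i1 i1)); rewrite !psi_phi //.
by move/(scalerI index_ratio_neq0).
Qed.

Lemma psi_word w i i' : filt K X' Y' iota' (size w) (psi (word X Y w) i i').
Proof.
case: psi_gens => psiX psiY _.
elim: w i i' => [|b w IHw] i i' /=.
  rewrite word_nil (alg_hom1 hpsi) mxalg_oneE; case: eqP => _; last exact: filt0.
  rewrite -(CBH_rel1 hH'.1) -[iota' 1]mul1r -(word_nil X' Y').
  by apply: filt_word; rewrite ?K1.
rewrite word_cons (alg_homM hpsi).
by case: b; rewrite ?psiX ?psiY mul_diag_of_mx; apply/filt_vecXY_mull/IHw.
Qed.

Lemma psi_filt n x i i' :
  filt G X Y iota n x -> filt K X' Y' iota' n (psi x i i').
Proof.
case: psi_gens => _ _ psi_iota [s [hs ->]].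
rewrite (alg_hom_sum hpsi) summxE big_seq; apply: filt_sum => t ts.
have /andP [wn tG] := allP hs t ts.
rewrite (alg_homZ hpsi) mxalg_scaleE (alg_homM hpsi) psi_iota // mxalg_mulE.
apply/filtZ/filt_sum => l _; rewrite ind_iotaE; case: ifP => [tK|_]; last first.
  by rewrite mulr0; apply: filt0.
exact: filt_mulr_iota (CBH_relM hH'.1) KM tK (filt_le wn (psi_word _ _ _)).
Qed.

Lemma filt_phi n a : sph_fixed a ->
  filt G X Y iota n (phi a) -> filt K X' Y' iota' n a.
Proof.
move=> fa /(psi_filt i1 i1) /(filtZ ((size K)%:R / (size G)%:R)^-1).
by rewrite psi_phi // scalerA mulVf ?index_ratio_neq0 // scale1r.
Qed.

End Induced.
End Restriction.
End Action.
End Quotient.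

Unset Implicit Arguments.

Theorem corollary2p9 (R : realType)
    (G K : seq 'M[R[i]]_2) (c : 'M[R[i]]_2 -> R[i])
    (H : algType R[i]) (X Y : H) (iota : 'M[R[i]]_2 -> H)
    (H' : algType R[i]) (X' Y' : H') (iota' : 'M[R[i]]_2 -> H')
    (hG : finite_subgroup_SL2 G) (hK : normal_subgroup K G)
    (hc : central_one G c) (hcK : in_group_algebra K c)
    (hH : is_CBH G c X Y iota) (hH' : is_CBH K c X' Y' iota') :
  let e := avg_idem G iota in
  let e' := avg_idem K iota' in
  exists alpha : 'M[R[i]]_2 -> H' -> H',
    [/\ {in G, forall g, alg_hom (alpha g) /\ bijective (alpha g)},
        {in G, forall g, alpha g X' = g 0 0 *: X' + g 1 0 *: Y' /\
                         alpha g Y' = g 0 1 *: X' + g 1 1 *: Y'},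
        {in G & K, forall g h, alpha g (iota' h) = iota' (g * h * invmx g)},
        {in G &, forall g h, alpha (g * h) =1 alpha g \o alpha h} &
        ({in G, forall g, forall a, spherical e' a -> spherical e' (alpha g a)} /\
         {in K, forall h, forall a, spherical e' a -> alpha h a = a})] /\
    exists phi : H' -> H,
      let Inv := fun a : H' => spherical e' a /\ {in G, forall g, alpha g a = a} in
      [/\ (forall a, Inv a -> spherical e (phi a)),
          (forall a b, Inv a -> Inv b -> phi a = phi b -> a = b),
          (forall b, spherical e b -> exists2 a, Inv a & phi a = b),
          phi e' = e &
          (forall (k : R[i]) a b, Inv a -> Inv b ->
             phi (k *: a + b) = k *: phi a + phi b /\ phi (a * b) = phi a * phi b)] /\
      (forall (n : nat) a, Inv a ->
         filt K X' Y' iota' n a <-> filt G X Y iota n (phi a)) /\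
      (forall j : H' -> H, alg_hom j -> on_gens K j X' Y' iota' X Y iota ->
         forall (n : nat) a, Inv a -> filt K X' Y' iota' n a ->
           filt_pred G X Y iota n (phi a - e * j a * e)).
Proof.
move=> e e'.
have char0 : has_pchar0 R[i] := Num.Theory.pchar_num _.
have [alpha alpha_spec] := act_exists hG hK hc hH'.
have [j [hj j_gens]] := CBH_hom_exists hH' (CBH_rel_restrict hG hK hcK hH).
have [rs rsT] := transversal_exists (SL2_mxgroup hG) (normal_mxgroup hG hK)
  (normal_subgroup_subset hK).
have [psi [hpsi psi_gens]] := CBH_hom_exists hH (CBH_rel_ind hG hK hc hcK hH' rsT).
exists alpha; split; [split=> [g gG|g gG|g h gG hK'|g h gG hG'|] |].
- exact: (conj (act_hom alpha_spec gG) (act_bij hG hK hH' alpha_spec gG)).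
- rewrite (act_X alpha_spec gG) (act_Y alpha_spec gG) /actX /actY.
  by rewrite vecXY_mul_ex vecXY_mul_ey.
- exact: (act_iotaE alpha_spec gG hK').
- exact: (actM hG hK hH' alpha_spec gG hG').
- split=> [g gG a|h hK' a]; first exact: (act_spherical hG hK alpha_spec gG).
  exact: (act_normal_fixed hG hK hH' alpha_spec hK').
have phi_fixed_inj := phi_inj hG hK hH hH' char0 alpha_spec hj j_gens rsT hpsi psi_gens.
have phi_fixedM := phiM hG hK hH hH' char0 alpha_spec hj j_gens.
exists (phi G iota j); split; [split|split].
- by move=> a _; apply: (phi_spherical hG hH char0).
- by move=> a b fa fb; apply: phi_fixed_inj.
- exact: (phi_surj hG hK hH hH' char0 alpha_spec hj j_gens).
- exact: (phi_e' hG hK hH char0 hj j_gens).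
- by move=> k a b fa fb; rewrite phi_lin // phi_fixedM.
- move=> n a fa; split; first exact: (phi_filt hG hK hH hH' char0 alpha_spec hj j_gens fa).
  exact: (filt_phi hG hK hH hH' char0 alpha_spec hj j_gens rsT hpsi psi_gens fa).
move=> j' hj' j'_gens n a _ _.
rewrite /phi (CBH_hom_unique_gens hH' hj hj' j_gens j'_gens) subrr.
by case: n => [|n] //; apply: filt0.
Qed.
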